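(* Let $0<b<1$ be fixed, let $\beta=1-b$, and let $t,k$ be constants with $t>\frac{1+\log 2}{\beta}-\log\beta$ and $k>\frac{2t}{1-e^{-t}}$. If $p=p(n)$ satisfies $np\ge k\log n$, then the random graph $G=\mathcal G(n,p)$ asymptotically almost surely has $\iota_v(G)\ge b$.
   Context: $\mathcal G(n,p)$ is the Erdős–Rényi random graph on $n$ labelled vertices with each edge present independently with probability $p$. ''Asymptotically almost surely'' means with probability tending to $1$ as $n\to\infty$. $\log$ is the natural logarithm. For a graph $G$ on $n$ vertices, $N(S)$ is the set of vertices with a neighbour in $S$ and $\iota_v(G)=\min_{0<|S|\le n/2}|N(S)\setminus S|/|S|$. *)

From mathcomp Require Import all_boot all_order all_algebra.
From mathcomp Require Import all_classical all_reals all_analysis.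
Set Implicit Arguments. Unset Strict Implicit. Unset Printing Implicit Defensive.
Import Order.TTheory GRing.Theory Num.Theory.
Local Open Scope ring_scope.

(* A simple graph on the labelled vertex set 'I_n is its edge set: a set of
   2-element subsets of 'I_n. *)
Definition pairs (n : nat) : {set {set 'I_n}} := [set e : {set 'I_n} | #|e| == 2%N].

Definition is_graph (n : nat) (G : {set {set 'I_n}}) : bool := G \subset pairs n.

Definition nbhd (n : nat) (G : {set {set 'I_n}}) (S : {set 'I_n}) : {set 'I_n} :=
  [set v | [exists u in S, [set u; v] \in G]].

(* iota_v(G) = min over 0 < |S| <= n/2 of |N(S) \ S| / |S|, as an extended
   real (the minimum over an empty family is +oo). *)
Definition iota_v {R : realType} (n : nat) (G : {set {set 'I_n}}) : \bar R :=
  \big[Order.min/+oo%E]_(S : {set 'I_n} | (0 < #|S|)%N && (2 * #|S| <= n)%N)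
     ((#|nbhd G S :\: S|%:R / #|S|%:R)%:E).

Definition gnp_weight {R : realType} (n : nat) (p : R) (G : {set {set 'I_n}}) : R :=
  p ^+ #|G| * (1 - p) ^+ (#|pairs n| - #|G|).

Definition gnp_prob {R : realType} (n : nat) (p : R) (P : {set {set 'I_n}} -> bool) : R :=
  \sum_(G in powerset (pairs n) | P G) gnp_weight p G.

From mathcomp Require Import all_boot all_order all_algebra.
From mathcomp Require Import all_classical all_reals all_analysis.
From mathcomp Require Import ring lra zify.
From mathcomp Require Import fintype finset.
Import Order.TTheory GRing.Theory Num.Theory numFieldNormedType.Exports.
Set Implicit Arguments. Unset Strict Implicit. Unset Printing Implicit Defensive.
Local Open Scope ring_scope.

(* If iota_v(G) < b, some S with 0 < |S| <= n/2 has a boundary W = N(S) \ S with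
   |W| < b|S|, and G has no edge between S and the complement of S u W.  By the
   union bound over the pairs (S, W), the probability of this is at most the sum
   of (1 - p)^(|S| (n - |S| - |W|)).  When |S| <= eN, e = (k-2)/(4k), a term is
   at most n^(-k|S|/2) n^(-|W|), and these sum to
   ((1 + n^(-k/2))^n - 1)(1 + 1/n)^n = O(n^(1 - k/2)); for larger S a term is at
   most n^(-cn), c = (k-2)(1-b)/8, which beats the 4^n pairs. *)

Lemma sum_powerset_binomial (R : comNzRingType) (T : finType) (A : {set T}) (x y : R) :
  \sum_(G in powerset A) x ^+ #|G| * y ^+ (#|A| - #|G|) = (x + y) ^+ #|A|.
Proof.
(* Expand \prod_i (F i + H i): F vanishes outside A, so only subsets of A survive. *)
pose F i : R := if i \in A then x else 0.
pose H i : R := if i \in A then y else 1.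
have hl : \prod_i (F i + H i) = (x + y) ^+ #|A|.
  rewrite (bigID (mem A)) /= [X in _ * X]big1 => [|i /negbTE Ai]; last by rewrite /F /H Ai add0r.
  by rewrite mulr1 -prodr_const; apply: eq_bigr => i Ai; rewrite /F /H Ai.
rewrite -hl (@bigA_distr R 0 1 *%R +%R T F H) [RHS](bigID (fun G : {set T} => G \subset A)) /=.
rewrite [X in _ = _ + X]big1 => [|G GA]; last first.
  have [i iG iA] := subsetPn GA.
  by rewrite (bigD1 i) //= iG /F (negbTE iA) mul0r.
rewrite addr0; apply: eq_big => [G|G]; first by rewrite powersetE.
rewrite powersetE => GA.
rewrite [RHS](bigID (mem G)) /= [X in _ = _ * X](bigID (mem A)) /=.
rewrite [X in _ = _ * (_ * X)]big1 => [|i /andP[/negbTE iG /negbTE iA]]; last by rewrite iG /H iA.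
rewrite mulr1 (eq_bigr (fun _ => x)) => [|i iG]; last by rewrite iG /F (subsetP GA).
rewrite [X in _ = _ * X](eq_bigr (fun _ => y)) => [|i /andP[/negbTE iG iA]]; last by rewrite iG /H iA.
rewrite !prodr_const; congr (_ * _ ^+ _).
by rewrite -(cardsID G A) (setIidPr GA) addKn; apply: eq_card => i; rewrite !inE.
Qed.

Lemma sum_set_exp (R : comNzRingType) (T : finType) (x : R) :
  \sum_(S : {set T}) x ^+ #|S| = (1 + x) ^+ #|T|.
Proof.
rewrite addrC -cardsT -sum_powerset_binomial powersetT.
by apply: eq_big => [S|S _]; rewrite ?in_setT ?expr1n ?mulr1.
Qed.

Lemma sum_set_exp_neq0 (R : comNzRingType) (T : finType) (x : R) :
  \sum_(S : {set T} | S != set0) x ^+ #|S| = (1 + x) ^+ #|T| - 1.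
Proof. by rewrite -sum_set_exp [in RHS](bigD1 set0) //= cards0 expr0 addrAC subrr add0r. Qed.

Section RandomGraph.
Variables (R : realType) (n : nat) (p : R).

Lemma gnp_prob_disjoint (F : {set {set 'I_n}}) :
  F \subset pairs n -> gnp_prob p (fun G => [disjoint G & F]) = (1 - p) ^+ #|F|.
Proof.
move=> sFP; rewrite /gnp_prob /gnp_weight.
set A := pairs n :\: F.
have cardP : #|pairs n| = (#|F| + #|A|)%N.
  by rewrite /A cardsD (setIidPr sFP) subnKC // subset_leq_card.
have -> : (1 - p) ^+ #|F| = (1 - p) ^+ #|F| * (p + (1 - p)) ^+ #|A|.
  by rewrite [p + _]addrC subrK expr1n mulr1.
rewrite -(sum_powerset_binomial A p) mulr_sumr.
apply: eq_big => [G|G]; first by rewrite !powersetE subsetD.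
rewrite powersetE => /andP[sGP dGF].
have sGA : (#|G| <= #|A|)%N by apply: subset_leq_card; rewrite subsetD sGP.
by rewrite cardP -addnBA // exprD mulrCA.
Qed.

Lemma gnp_prob_predT : gnp_prob p (@predT {set {set 'I_n}}) = 1.
Proof.
rewrite -(expr0 (1 - p)) -(cards0 {set 'I_n}) -gnp_prob_disjoint ?sub0set //.
by apply: eq_bigl => G; rewrite disjoints_subset setC0 subsetT.
Qed.

Lemma gnp_probC (P : pred {set {set 'I_n}}) :
  gnp_prob p P = 1 - gnp_prob p (fun G => ~~ P G).
Proof.
rewrite -gnp_prob_predT /gnp_prob.
under [X in _ = X - _]eq_bigl do rewrite andbT.
by rewrite [X in _ = X - _](bigID P) addrK.
Qed.

Hypothesis p01 : 0 <= p <= 1.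

Lemma gnp_weight_ge0 (G : {set {set 'I_n}}) : 0 <= gnp_weight p G.
Proof. by case/andP: p01 => p0 p1; rewrite /gnp_weight mulr_ge0 // exprn_ge0 // subr_ge0. Qed.

Lemma gnp_prob_ge0 (P : pred {set {set 'I_n}}) : 0 <= gnp_prob p P.
Proof. by apply: sumr_ge0 => G _; apply: gnp_weight_ge0. Qed.

Lemma gnp_prob_union_bound (I : finType) (Q : pred I) (P : pred {set {set 'I_n}})
    (E : I -> pred {set {set 'I_n}}) :
  (forall G : {set {set 'I_n}}, G \subset pairs n -> P G -> exists2 i, Q i & E i G) ->
  gnp_prob p P <= \sum_(i | Q i) gnp_prob p (E i).
Proof.
move=> coverP; rewrite /gnp_prob; under [X in _ <= X]eq_bigr do rewrite big_mkcondr.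
rewrite exchange_big /= [X in X <= _]big_mkcondr /=.
apply: ler_sum => G; rewrite powersetE => sGP; case: ifP => [PG|_]; last first.
  by apply: sumr_ge0 => i _; case: ifP => // _; apply: gnp_weight_ge0.
have [i Qi EiG] := coverP G sGP PG.
rewrite (bigD1 i) //= EiG lerDl; apply: sumr_ge0 => j _.
by case: ifP => // _; apply: gnp_weight_ge0.
Qed.

End RandomGraph.

Section CrossPairs.
Variables (n : nat) (S T : {set 'I_n}).
Hypothesis dST : [disjoint S & T].

Definition cross_pairs : {set {set 'I_n}} := [set [set uv.1; uv.2] | uv in setX S T].

Lemma cross_pairs_inj :
  {in setX S T &, injective (fun uv : 'I_n * 'I_n => [set uv.1; uv.2])}.
Proof.
have notS v : v \in T -> v \notin S by move=> vT; rewrite (disjointFl dST vT).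
move=> [u v] [u' v']; rewrite !inE /= => /andP[uS vT] /andP[u'S v'T] e.
have : u \in [set u'; v'] by rewrite -e set21.
rewrite !inE => /orP[/eqP eu|/eqP eu]; last by move: (notS _ v'T); rewrite -eu uS.
subst u'; have : v \in [set u; v'] by rewrite -e set22.
rewrite !inE => /orP[/eqP ev|/eqP -> //].
by move: (notS _ vT); rewrite ev uS.
Qed.

Lemma card_cross_pairs : #|cross_pairs| = (#|S| * #|T|)%N.
Proof. by rewrite card_in_imset ?cardsX //; apply: cross_pairs_inj. Qed.

Lemma cross_pairs_sub : cross_pairs \subset pairs n.
Proof.
apply/subsetP => e /imsetP[[u v]]; rewrite !inE /= => /andP[uS vT] ->.
rewrite cards2; case: (u =P v) => [euv|//].
by move: vT; rewrite -euv (disjointFr dST uS).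
Qed.

End CrossPairs.

(* SW.2 stands for the vertex boundary N(S) \ S of S = SW.1. *)
Definition expansion_witness (R : realType) (n : nat) (b : R)
    (SW : {set 'I_n} * {set 'I_n}) : bool :=
  [&& (0 < #|SW.1|)%N, (2 * #|SW.1| <= n)%N & #|SW.2|%:R < b * #|SW.1|%:R].

Lemma iota_v_lt_witness (R : realType) (n : nat) (b : R) (G : {set {set 'I_n}}) :
  ~~ (b%:E <= iota_v G)%E ->
  exists2 SW, expansion_witness b SW & [disjoint G & cross_pairs SW.1 (~: (SW.1 :|: SW.2))].
Proof.
move=> iotaG; have /existsP[S /and3P[S0 Sn NSb]] : [exists S : {set 'I_n},
    [&& (0 < #|S|)%N, (2 * #|S| <= n)%N & ((#|nbhd G S :\: S|%:R / #|S|%:R)%:E < b%:E)%E]].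
  apply: contraNT iotaG => /existsPn noS.
  apply: (big_ind (fun y => b%:E <= y)%E) => [|x y bx yb|S /andP[S0 Sn]]; first exact: leey.
    by rewrite le_min bx yb.
  by move: (noS S); rewrite S0 Sn /= -leNgt.
exists (S, nbhd G S :\: S).
  by rewrite /expansion_witness S0 Sn /= -ltr_pdivrMr ?ltr0n // -lte_fin.
rewrite /= -setI_eq0; apply/eqP/setP => e; rewrite !inE.
apply/negP => /andP[eG /imsetP[[u v]]]; rewrite !inE /= => /andP[uS vC] ee.
have vN : [exists u in S, [set u; v] \in G] by apply/existsP; exists u; rewrite uS -ee eG.
by move: vC; rewrite vN andbT orbN.
Qed.

Lemma gnp_iota_v_lt_le (R : realType) (n : nat) (b p : R) : 0 <= p <= 1 ->
  gnp_prob p (fun G : {set {set 'I_n}} => ~~ (b%:E <= iota_v G)%E) <=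
  \sum_(SW : {set 'I_n} * {set 'I_n} | expansion_witness b SW)
     (1 - p) ^+ (#|SW.1| * #|~: (SW.1 :|: SW.2)|).
Proof.
move=> p01.
under eq_bigr => SW _.
  have dS : [disjoint SW.1 & ~: (SW.1 :|: SW.2)] by rewrite disjoints_subset setCK subsetUl.
  rewrite -card_cross_pairs // -gnp_prob_disjoint ?cross_pairs_sub //.
over.
apply: gnp_prob_union_bound => // G _; exact: iota_v_lt_witness.
Qed.

Lemma expR_cut_le (R : realType) (b k N L p s w m : R) :
  0 < b -> b < 1 -> 2 < k -> 0 <= L -> 0 <= p -> k * L <= N * p ->
  2 * s <= N -> 0 <= w -> w < b * s -> N - s - w <= m ->
  expR (- (p * (s * m))) <=
    expR (- (k / 2 * L * s + L * w)) + expR (- ((k - 2) * (1 - b) / 8 * N * L)).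
Proof.
move=> b0 b1 k2 L0 p0 kLp sN w0 wbs Nm.
have k0 : 0 < k by lra.
have s0 : 0 <= s by rewrite -(pmulr_rge0 s b0); lra.
set e := (k - 2) / (4 * k).
have e0 : 0 <= e by apply: divr_ge0; lra.
(* e is chosen so that (1 - 2e) k = (k + 2) / 2. *)
have [se|es] := leP s (e * N).
  apply: ler_wpDr; first exact: expR_ge0.
  rewrite ler_expR lerN2.
  have Nm' : (k + 2) / (2 * k) * N <= m.
    have -> : (k + 2) / (2 * k) = 1 - 2 * e by rewrite /e; field; lra.
    nra.
  have kL : (k + 2) / 2 * L <= (k + 2) / (2 * k) * (N * p).
    have -> : (k + 2) / 2 * L = (k + 2) / (2 * k) * (k * L) by field; lra.
    by apply: ler_wpM2l => //; apply: divr_ge0; lra.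
  have psm : p * (s * ((k + 2) / (2 * k) * N)) <= p * (s * m).
    by apply: ler_wpM2l => //; apply: ler_wpM2l.
  have sL : s * ((k + 2) / 2 * L) <= s * ((k + 2) / (2 * k) * (N * p)) by apply: ler_wpM2l.
  have Lw : L * w <= L * s by apply: ler_wpM2l => //; nra.
  have e1 : s * ((k + 2) / 2 * L) = k / 2 * L * s + L * s by field.
  have e2 : s * ((k + 2) / (2 * k) * (N * p)) = p * (s * ((k + 2) / (2 * k) * N)) by ring.
  lra.
apply: ler_wpDl; first exact: expR_ge0.
rewrite ler_expR lerN2.
have Nm' : (1 - b) * N / 2 <= m by nra.
have N0 : 0 <= N by lra.
have sm : e * N * ((1 - b) * N / 2) <= s * m.
  apply: ler_pM => //; [exact: mulr_ge0 | apply: divr_ge0 => //; apply: mulr_ge0; lra | exact: ltW].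
have psm : p * (e * N * ((1 - b) * N / 2)) <= p * (s * m) by apply: ler_wpM2l.
have c0 : 0 <= e * (1 - b) * N / 2.
  by apply: divr_ge0 => //; apply: mulr_ge0 => //; apply: mulr_ge0 => //; lra.
have kL := ler_wpM2r c0 kLp.
have e1 : (k - 2) * (1 - b) / 8 * N * L = (k * L) * (e * (1 - b) * N / 2).
  by rewrite /e; field; lra.
have e2 : (N * p) * (e * (1 - b) * N / 2) = p * (e * N * ((1 - b) * N / 2)) by ring.
lra.
Qed.

Lemma ler_sum_subpred (R : numDomainType) (I : finType) (P Q : pred I) (F : I -> R) :
  {subset P <= Q} -> (forall i, 0 <= F i) -> \sum_(i | P i) F i <= \sum_(i | Q i) F i.
Proof.
move=> PQ F0; rewrite [leRHS](bigID P) /= (eq_bigl P) => [|i]; last exact/andb_idl/PQ.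
by rewrite lerDl sumr_ge0.
Qed.

Lemma expr1D_le_expR (R : realType) (x : R) (n : nat) :
  0 <= x -> (1 + x) ^+ n <= expR (n%:R * x).
Proof.
move=> x0; rewrite expRM_natl lerXn2r ?nnegrE ?expR_ge0 ?expR_ge1Dx //.
exact: addr_ge0.
Qed.

Lemma witness_sum_le (R : realType) (n : nat) (b k p : R) :
  0 < b -> b < 1 -> 2 < k -> 0 <= p <= 1 -> (1 <= n)%N -> k * ln n%:R <= n%:R * p ->
  \sum_(SW : {set 'I_n} * {set 'I_n} | expansion_witness b SW)
     (1 - p) ^+ (#|SW.1| * #|~: (SW.1 :|: SW.2)|) <=
  ((1 + expR (- (k / 2 * ln n%:R))) ^+ n - 1) * (1 + expR (- ln n%:R)) ^+ n
  + 4 ^+ n * expR (- ((k - 2) * (1 - b) / 8 * n%:R * ln n%:R)).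
Proof.
move=> b0 b1 k2 /andP[p0 p1] n1 kLp.
set L := ln n%:R; set x := expR (- (k / 2 * L)); set y := expR (- L).
set T2 := expR (- ((k - 2) * (1 - b) / 8 * n%:R * L)).
pose g (SW : {set 'I_n} * {set 'I_n}) := x ^+ #|SW.1| * y ^+ #|SW.2|.
have g0 SW : 0 <= g SW by rewrite mulr_ge0 // exprn_ge0 // expR_ge0.
have L0 : 0 <= L by apply: ln_ge0; rewrite ler1n.
apply: (@le_trans _ _ (\sum_(SW | expansion_witness b SW) (g SW + T2))).
  apply: ler_sum => -[S W] /and3P[/= S0 Sn Wb].
  set m := #|~: (S :|: W)|.
  have Nm : n%:R - #|S|%:R - #|W|%:R <= m%:R :> R.
    have := cardsC (S :|: W); rewrite card_ord cardsU => cardSW.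
    by rewrite lerBlDr lerBlDr -!natrD ler_nat; lia.
  have -> : g (S, W) = expR (- (k / 2 * L * #|S|%:R + L * #|W|%:R)).
    by rewrite /g /x /y -!expRM_natr -expRD; congr expR; ring.
  apply: le_trans (expR_cut_le b0 b1 k2 L0 p0 kLp _ _ Wb Nm).
  - rewrite -mulNr -natrM expRM_natr lerXn2r ?nnegrE ?subr_ge0 ?expR_ge0 //.
    exact: expR_ge1Dx.
  - by rewrite -natrM ler_nat.
  - by rewrite ler0n.
rewrite big_split /=; apply: lerD.
  apply: le_trans (ler_sum_subpred (Q := fun SW => SW.1 != set0) _ g0) _.
    by move=> [S W] /and3P[/= S0 _ _]; rewrite unfold_in /= -card_gt0.
  rewrite -[n in (1 + x) ^+ n](card_ord n) -[n in (1 + y) ^+ n](card_ord n).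
  rewrite -sum_set_exp_neq0 -sum_set_exp mulr_suml.
  under [leRHS]eq_bigr do rewrite mulr_sumr.
  by rewrite pair_big /=; under [leRHS]eq_bigl do rewrite andbT.
have T20 : 0 <= T2 by apply: expR_ge0.
apply: le_trans (ler_sum_subpred (Q := predT) _ (fun=> T20)) _ => //.
rewrite sumr_const card_prod -cardsT -powersetT card_powerset cardsT card_ord.
by rewrite -[T2 *+ _]mulr_natl natrM natrX -exprMn -natrM.
Qed.

Local Open Scope classical_set_scope.

Lemma expR_sub1_le (R : realType) (z : R) : 0 <= z -> z <= 1 / 2 -> expR z - 1 <= 2 * z.
Proof.
move=> z0 z1; have := expR_ge1Dx (- z); have := expRxMexpNx_1 z.
have := expR_gt0 z; have := expR_gt0 (- z); nra.
Qed.

Lemma nbhs_infty_ln_ge (R : realType) (a : R) : \forall n \near \oo, a <= ln (n%:R : R).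
Proof.
apply: filterS (nbhs_infty_ger (expR a)) => n an.
have n0 : 0 < n%:R :> R by apply: lt_le_trans an; apply: expR_gt0.
by rewrite -[a]expRK ler_ln ?posrE ?expR_gt0.
Qed.

Lemma nbhs_infty_expR_Nln_le (R : realType) (a d : R) : 0 < a -> 0 < d ->
  \forall n \near \oo, expR (- (a * ln (n%:R : R))) <= d.
Proof.
move=> a0 d0; apply: filterS (nbhs_infty_ln_ge (- ln d / a)) => n dn.
by rewrite -[d]lnK ?posrE // ler_expR lerNl -ler_pdivrMl // mulrC.
Qed.

Lemma small_sets_term_vanishes (R : realType) (k eps : R) : 2 < k -> 0 < eps ->
  \forall n \near \oo,
    ((1 + expR (- (k / 2 * ln (n%:R : R)))) ^+ n - 1) * (1 + expR (- ln (n%:R : R))) ^+ n <= eps.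
Proof.
move=> k2 eps0.
set d := Num.min (1 / 2) (eps / (2 * expR 1)).
have d0 : 0 < d.
  by rewrite lt_min; apply/andP; split; [lra | rewrite divr_gt0 // mulr_gt0 ?expR_gt0].
have k20 : 0 < (k - 2) / 2 by apply: divr_gt0; lra.
apply: filterS2 (nbhs_infty_expR_Nln_le k20 d0) (nbhs_infty_ger 1) => n zd n1.
set L := ln (n%:R : R); set z := expR (- ((k - 2) / 2 * L)).
have nL : expR L = n%:R by rewrite lnK // posrE; lra.
have nx : n%:R * expR (- (k / 2 * L)) = z by rewrite -nL -expRD /z; congr expR; field.
have ny : n%:R * expR (- L) = 1 by rewrite -nL -expRD addrN expR0.
have z0 : 0 <= z by apply: expR_ge0.
have z2 : z <= 1 / 2 by apply: le_trans zd _; rewrite ge_min lexx.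
have ze : 2 * z * expR 1 <= eps.
  have : z <= eps / (2 * expR 1) by apply: le_trans zd _; rewrite ge_min lexx orbT.
  by rewrite ler_pdivlMr ?mulr_gt0 ?expR_gt0 // mulrA [z * 2]mulrC.
apply: le_trans ze; apply: ler_pM.
- by rewrite subr_ge0 exprn_ege1 // lerDl expR_ge0.
- by rewrite exprn_ge0 // addr_ge0 ?expR_ge0.
- rewrite lerBlDl; apply: le_trans (expr1D_le_expR _ (expR_ge0 _)) _.
  by rewrite nx -lerBlDl expR_sub1_le.
- by apply: le_trans (expr1D_le_expR _ (expR_ge0 _)) _; rewrite ny.
Qed.

Lemma large_sets_term_vanishes (R : realType) (c eps : R) : 0 < c -> 0 < eps ->
  \forall n \near \oo, 4 ^+ n * expR (- (c * n%:R * ln (n%:R : R))) <= eps.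
Proof.
move=> c0 eps0.
apply: filterS2 (nbhs_infty_ln_ge ((ln 4 + 1) / c)) (nbhs_infty_ger (- ln eps)) => n Ln epsn.
have n0 : 0 <= n%:R :> R by [].
rewrite -[4]lnK ?posrE // -expRM_natl -expRD -[eps]lnK ?posrE // ler_expR.
move: Ln; rewrite ler_pdivrMr // => Ln.
nra.
Qed.

Lemma two_lt_of_exp_threshold (R : realType) (t k : R) :
  0 < t -> 2 * t / (1 - expR (- t)) < k -> 2 < k.
Proof.
move=> t0; apply: le_lt_trans.
have d0 : 0 < 1 - expR (- t) by rewrite subr_gt0 expR_lt1 oppr_lt0.
by rewrite ler_pdivlMr // ler_pM2l //; have := expR_ge1Dx (- t); lra.
Qed.

Theorem mainTheorem4 (R : realType) (b beta t k : R) (p : nat -> R) :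
  0 < b -> b < 1 -> beta = 1 - b ->
  t > (1 + ln 2) / beta - ln beta ->
  k > 2 * t / (1 - expR (- t)) ->
  (forall n, 0 <= p n <= 1) ->
  (\forall n \near \oo, (n%:R * p n >= k * ln n%:R)) ->
  (fun n => gnp_prob (p n) (fun G : {set {set 'I_n}} => (b%:E <= iota_v G)%E))
    @ \oo --> (1 : R).
Proof.
move=> b0 b1 -> ht hk p01 kLp.
have t0 : 0 < t.
  have l2 : 0 <= ln (2 : R) by apply: ln_ge0; lra.
  have : 0 < (1 + ln 2) / (1 - b) by apply: divr_gt0; lra.
  have : ln (1 - b) <= 0 by apply: ln_le0; lra.
  lra.
have k2 := two_lt_of_exp_threshold t0 hk.
have c0 : 0 < (k - 2) * (1 - b) / 8 by rewrite divr_gt0 // mulr_gt0; lra.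
apply/cvgrPdist_le => eps eps0.
have eps2 : 0 < eps / 2 by rewrite divr_gt0.
have small := small_sets_term_vanishes k2 eps2.
have large := large_sets_term_vanishes c0 eps2.
near=> n.
rewrite gnp_probC subKr ger0_norm ?gnp_prob_ge0 //.
apply: le_trans (gnp_iota_v_lt_le n b (p01 n)) _.
apply: le_trans (witness_sum_le b0 b1 k2 (p01 n) _ _) _.
- by rewrite -(ler_nat R); near: n; apply: nbhs_infty_ger.
- by near: n.
by rewrite [leRHS]splitr lerD //; near: n.
Unshelve. all: end_near.
Qed.
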